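(* Let $C_{\mathrm{hyp}}\ge1$ and let $t=v-h(r)$ on the domain of outer communication $\{r>r_+\}$ of a subextreme Kerr spacetime, where $h(r)=2(r-r_+)+4M\log\left(\frac{r}{r_+}\right)+\frac{3M^2(r_+-r)^2}{r_+r^2}+2M\arctan\left(\frac{(C_{\mathrm{hyp}}-1)M}{r}\right)-2M\arctan\left(\frac{(C_{\mathrm{hyp}}-1)M}{r_+}\right)$. Then $t$ is a regular, future hyperboloidal time function. Further, $h(r_+)=0$, $h'(r)\ge0$ for $r\ge r_+$, $\lim_{r\to\infty}h(r)/r=2$, and $\lim_{r\to\infty}\frac{r^2}{M^2}V^a\nabla_at=C_{\mathrm{hyp}}$.
   Context: Kerr spacetime with $M>0$, $|a|<M$, in ingoing Eddington–Finkelstein coordinates $(v,r,\theta,\phi)$ with metric $g_{ab}=-2(dr)_{(a}(dv)_{b)}+2a\sin^2\theta(d\phi)_{(a}(dr)_{b)}+\frac{4Mar\sin^2\theta}{\Sigma}(d\phi)_{(a}(dv)_{b)}+\frac{\Delta-a^2\sin^2\theta}{\Sigma}(dv)_a(dv)_b+\frac{a^2\sin^2\theta\Delta-(a^2+r^2)^2}{\Sigma}\sin^2\theta(d\phi)_a(d\phi)_b-\Sigma(d\theta)_a(d\theta)_b$, $\Sigma=r^2+a^2\cos^2\theta$, $\Delta=r^2-2Mr+a^2$, $r_+=M+\sqrt{M^2-a^2}$. Vector fields $V^a=\partial_v+\frac{\Delta}{2(a^2+r^2)}\partial_r+\frac{a}{a^2+r^2}\partial_\phi$, $Y^a=-\partial_r$.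 A function $t=v-k(r)$ is a regular, future hyperboloidal time function if: (a) $k$ is smooth in an open neighbourhood of $[r_+,\infty)$; (b) $K(R)=k'(1/R)$ is smooth in an open neighbourhood of $[0,1/r_+]$; (c) the level sets of $t$ are strictly spacelike in $\{r>r_+\}$; (d) $\lim_{r\to\infty}\frac{r^2}{M^2}V^a\nabla_at$ exists and is positive; (e) $\lim_{r\to\infty}Y^a\nabla_at=2$. *)

From Stdlib Require Import Reals.
From Coquelicot Require Import Coquelicot.
Open Scope R_scope.

Definition Sigma (a r th : R) : R := r^2 + a^2 * (cos th)^2.
Definition Delta (M a r : R) : R := r^2 - 2*M*r + a^2.
Definition rplus (M a : R) : R := M + sqrt (M^2 - a^2).

Record vec4 := mkvec4 { Xv : R; Xr : R; Xth : R; Xph : R }.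

(* The quadratic form g_{ab} X^a X^b of the Kerr metric in ingoing
   Eddington--Finkelstein coordinates at the point (r, theta)
   (the metric is independent of v and phi). *)
Definition kerr_g (M a r th : R) (X : vec4) : R :=
  let s2 := (sin th)^2 in
  let S := Sigma a r th in
  let D := Delta M a r in
  - 2 * Xr X * Xv X
  + 2 * a * s2 * Xph X * Xr X
  + (4 * M * a * r * s2 / S) * Xph X * Xv X
  + ((D - a^2 * s2) / S) * (Xv X)^2
  + ((a^2 * s2 * D - (a^2 + r^2)^2) / S) * s2 * (Xph X)^2
  - S * (Xth X)^2.

Definition dt_apply (k : R -> R) (r : R) (X : vec4) : R :=
  Xv X - Derive k r * Xr X.

Definition Vfield (M a r : R) : vec4 :=
  mkvec4 1 (Delta M a r / (2 * (a^2 + r^2))) 0 (a / (a^2 + r^2)).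
Definition Yfield : vec4 := mkvec4 0 (-1) 0 0.

Definition Vt (M a : R) (k : R -> R) (r : R) : R := dt_apply k r (Vfield M a r).
Definition Yt (k : R -> R) (r : R) : R := dt_apply k r Yfield.

Definition smooth_on (U : R -> Prop) (f : R -> R) : Prop :=
  forall (n : nat) (x : R), U x -> ex_derive_n f n x.

Definition regular_future_hyperboloidal (M a : R) (k : R -> R) : Prop :=
  (exists U : R -> Prop, open U /\ (forall r, rplus M a <= r -> U r) /\ smooth_on U k) /\
  (exists (U : R -> Prop) (K : R -> R), open U /\
      (forall R0, 0 <= R0 <= / rplus M a -> U R0) /\ smooth_on U K /\
      (forall R0, U R0 -> 0 < R0 -> K R0 = Derive k (/ R0))) /\
  (* (c) level sets strictly spacelike in r > r_+: the induced metric on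
     the tangent space {X | dt(X) = 0} is negative definite
     (signature (+,-,-,-); theta restricted to (0,pi), off the coordinate axis) *)
  (forall r th (X : vec4), rplus M a < r -> 0 < th < PI ->
      dt_apply k r X = 0 -> X <> mkvec4 0 0 0 0 -> kerr_g M a r th X < 0) /\
  (exists L : R, is_lim (fun r => r^2 / M^2 * Vt M a k r) p_infty L /\ 0 < L) /\
  is_lim (fun r => Yt k r) p_infty 2.

Definition hyp_h (M a C : R) (r : R) : R :=
  let rp := rplus M a in
  2 * (r - rp) + 4 * M * ln (r / rp)
  + 3 * M^2 * (rp - r)^2 / (rp * r^2)
  + 2 * M * atan ((C - 1) * M / r)
  - 2 * M * atan ((C - 1) * M / rp).

From Pilot Require Import Defs.
From Stdlib Require Import Reals Lra Psatz.
From Coquelicot Require Import Coquelicot.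
Open Scope R_scope.

(* With c = (C-1)M one has
     h'(r) = 2 + 4M/r + 6M^2 (r - r_+)/r^3 - 2Mc/(r^2 + c^2),
   a rational function of r and of R = 1/r; this gives the smoothness claims, and the
   limits at infinity are values at R = 0.  On a level set of t, X^v = h'(r) X^r, and
   completing the square in X^phi shows that the metric is negative there as soon as
   the quadratic  Delta p^2 - 2 (r^2 + a^2) p + a^2  is negative at p = h'(r).  This
   quadratic is convex in p and 2 <= h'(r) <= 2 + 4M/r + 6M^2 (r - r_+)/r^3, so it
   suffices to check the two endpoints; at the upper one, eliminating
   a^2 = 2 M r_+ - r_+^2 leaves a polynomial in r_+/r, M/r_+, r_+/M of fixed sign. *)

Lemma ex_derive_n_S_of_is_derive (D : R -> Prop) (f f' : R -> R) (n : nat) (x : R) :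
  open D -> (forall y, D y -> is_derive f y (f' y)) -> D x ->
  ex_derive_n f' n x -> ex_derive_n f (S n) x.
Proof.
  intros HD Hf Hx Hf'.
  destruct n as [|n]; [exists (f' x); apply Hf; exact Hx|].
  change (ex_derive (Derive_n f (S n)) x).
  apply (ex_derive_ext (Derive_n (Derive f) n)).
  { intros y. rewrite (Derive_n_comp f n 1), Nat.add_1_r. reflexivity. }
  change (ex_derive_n (Derive f) (S n) x).
  apply (ex_derive_n_ext_loc f'); [|exact Hf'].
  apply (filter_imp D); [|apply HD; exact Hx].
  intros y Hy. symmetry. apply is_derive_unique, Hf, Hy.
Qed.

Lemma smooth_on_is_derive (D : R -> Prop) (f f' : R -> R) :
  open D -> (forall x, D x -> is_derive f x (f' x)) ->
  smooth_on D f' -> smooth_on D f.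
Proof.
  intros HD Hf Hf' [|n] x Hx; [exact I|].
  exact (ex_derive_n_S_of_is_derive D f f' n x HD Hf Hx (Hf' n x Hx)).
Qed.

Inductive rational_on (D : R -> Prop) : (R -> R) -> Prop :=
| rational_const c : rational_on D (fun _ => c)
| rational_id : rational_on D (fun x => x)
| rational_opp f : rational_on D f -> rational_on D (fun x => - f x)
| rational_plus f g :
    rational_on D f -> rational_on D g -> rational_on D (fun x => f x + g x)
| rational_mult f g :
    rational_on D f -> rational_on D g -> rational_on D (fun x => f x * g x)
| rational_pow f n : rational_on D f -> rational_on D (fun x => f x ^ n)
| rational_inv f :
    rational_on D f -> (forall x, D x -> f x <> 0) -> rational_on D (fun x => / f x).

Lemma rational_on_is_derive (D : R -> Prop) (f : R -> R) :
  rational_on D f ->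
  exists f', rational_on D f' /\ forall x, D x -> is_derive f x (f' x).
Proof.
  induction 1 as [c| |f _ [f' [Rf' Df']]|f g _ [f' [Rf' Df']] _ [g' [Rg' Dg']]
                  |f g Rf [f' [Rf' Df']] Rg [g' [Rg' Dg']]|f n Rf [f' [Rf' Df']]
                  |f Rf [f' [Rf' Df']] Hf].
  - exists (fun _ => 0). split; [constructor|]. intros x _. auto_derive; reflexivity.
  - exists (fun _ => 1). split; [constructor|]. intros x _. auto_derive; reflexivity.
  - exists (fun x => - f' x). split; [now constructor|].
    intros x Hx. apply (is_derive_opp f), Df', Hx.
  - exists (fun x => f' x + g' x). split; [now constructor|].
    intros x Hx. apply (is_derive_plus f g); auto.
  - exists (fun x => f' x * g x + f x * g' x).
    split; [constructor; constructor; assumption|].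
    intros x Hx. apply (is_derive_mult f g); auto. intros; apply Rmult_comm.
  - exists (fun x => INR n * f' x * f x ^ pred n).
    split; [repeat constructor; assumption|].
    intros x Hx. apply is_derive_pow, Df', Hx.
  - exists (fun x => - f' x * / f x ^ 2).
    split; [repeat constructor; auto; intros x Hx; apply pow_nonzero, Hf, Hx|].
    intros x Hx. apply is_derive_inv; auto.
Qed.

Lemma rational_on_smooth (D : R -> Prop) (f : R -> R) :
  open D -> rational_on D f -> smooth_on D f.
Proof.
  intros HD Hf n. revert f Hf. induction n as [|n IH]; intros f Hf x Hx; [exact I|].
  destruct (rational_on_is_derive D f Hf) as [f' [Rf' Df']].
  exact (ex_derive_n_S_of_is_derive D f f' n x HD Df' Hx (IH f' Rf' x Hx)).
Qed.

Ltac rational_on_split :=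
  unfold Rminus, Rdiv;
  repeat first [ apply rational_const | apply rational_id | apply rational_plus
               | apply rational_opp | apply rational_mult | apply rational_pow
               | apply rational_inv ].

Lemma sum_sq_pos (c b k l x y z : R) :
  c <> 0 -> 0 < k -> 0 < l -> ~ (x = 0 /\ y = 0 /\ z = 0) ->
  0 < (c * x + b * y)^2 + k * y^2 + l * z^2.
Proof.
  intros Hc Hk Hl Hxyz.
  assert (0 <= (c * x + b * y)^2) by apply pow2_ge_0.
  destruct (Req_dec y 0) as [->|Hy]; [destruct (Req_dec z 0) as [->|Hz]|].
  - assert (Hx : x <> 0) by tauto.
    assert (0 < (c * x)^2) by (apply pow2_gt_0, Rmult_integral_contrapositive; tauto).
    replace (c * x + b * 0) with (c * x) by ring. nra.
  - assert (0 < z^2) by (apply pow2_gt_0; exact Hz). nra.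
  - assert (0 < y^2) by (apply pow2_gt_0; exact Hy). assert (0 <= z^2) by apply pow2_ge_0. nra.
Qed.

(* Completing the square in X^phi; the weight A is negative outside the horizon. *)
Lemma kerr_g_slope_decomp (M a r th p : R) (X : vec4) :
  Xv X = p * Xr X -> Sigma a r th <> 0 ->
  let s := sin th ^ 2 in let S := Sigma a r th in
  let D := Defs.Delta M a r in let Q := r^2 + a^2 in
  let A := s * (a^2 * s * D - Q^2) in
  A * S * kerr_g M a r th X
  = (A * Xph X + a * s * (S + 2*M*r*p) * Xr X)^2
    - s * S^2 * (D * p^2 - 2 * Q * p + a^2 * s) * Xr X ^ 2
    - A * S^2 * Xth X ^ 2.
Proof.
  intros Hv HS; cbv zeta.
  assert (Hcos : cos th ^ 2 = 1 - sin th ^ 2)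
    by (rewrite <- (sin2_cos2 th); unfold Rsqr; ring).
  unfold kerr_g, Sigma, Defs.Delta in *; rewrite Hcos in *.
  destruct X as [xv xr xth xph]; simpl in *; subst xv.
  field; contradict HS; lra.
Qed.

Definition slope_quad (M a r p : R) : R :=
  Defs.Delta M a r * p^2 - 2 * (r^2 + a^2) * p + a^2.

Lemma kerr_g_neg_of_slope (M a r th p : R) (X : vec4) :
  0 < M -> 0 < r -> 0 < Defs.Delta M a r -> 0 < th < PI -> slope_quad M a r p < 0 ->
  Xv X = p * Xr X -> X <> mkvec4 0 0 0 0 -> kerr_g M a r th X < 0.
Proof.
  intros HM Hr HD Hth Hp Hv HX.
  assert (Hs : 0 < sin th ^ 2) by (apply pow2_gt_0, Rgt_not_eq, sin_gt_0; lra).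
  assert (Hs1 : sin th ^ 2 <= 1).
  { rewrite <- (sin2_cos2 th). unfold Rsqr. simpl. nra. }
  assert (HS : 0 < Sigma a r th).
  { unfold Sigma. assert (0 <= a^2 * cos th ^ 2) by (apply Rmult_le_pos; apply pow2_ge_0). nra. }
  pose proof (kerr_g_slope_decomp M a r th p X Hv (Rgt_not_eq _ _ HS)) as Hdec; cbv zeta in Hdec.
  unfold slope_quad in Hp.
  set (s := sin th ^ 2) in *. set (S := Sigma a r th) in *.
  set (D := Defs.Delta M a r) in *. set (Q := r^2 + a^2) in *.
  assert (HDQ : D = Q - 2 * M * r) by (unfold D, Q, Defs.Delta; ring).
  assert (Ha2 : a^2 <= Q) by (unfold Q; nra).
  assert (HA : s * (a^2 * s * D - Q^2) < 0).
  { assert (a^2 * s * D <= a^2 * D) by (apply Rmult_le_compat_r; nra).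
    assert (a^2 * D <= Q * D) by (apply Rmult_le_compat_r; lra).
    assert (Q * D < Q * Q) by (apply Rmult_lt_compat_l; nra).
    nra. }
  set (A := s * (a^2 * s * D - Q^2)) in *.
  assert (Hpos : 0 < (A * Xph X + a * s * (S + 2 * M * r * p) * Xr X)^2
                     + (- (s * S^2 * (D * p^2 - 2 * Q * p + a^2 * s))) * Xr X ^ 2
                     + (- A * S^2) * Xth X ^ 2).
  { apply sum_sq_pos; [lra| |apply Rmult_lt_0_compat; [lra|apply pow2_gt_0; lra]|].
    - assert (D * p^2 - 2 * Q * p + a^2 * s < 0) by nra.
      assert (0 < s * S^2) by (apply Rmult_lt_0_compat; [lra|apply pow2_gt_0; lra]). nra.
    - intros (Hph & Hr0 & Hth0). apply HX. destruct X as [xv xr xth xph].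
      cbn in *. subst. f_equal; ring. }
  assert (Hg : 0 < (A * S) * kerr_g M a r th X) by (rewrite Hdec; lra).
  assert (HAS : 0 < - (A * S)) by (rewrite Ropp_mult_distr_l; apply Rmult_lt_0_compat; lra).
  nra.
Qed.

Lemma convex_quad_neg_between (A B C lo hi p : R) :
  0 <= A -> lo <= p <= hi ->
  A * lo^2 - B * lo + C < 0 -> A * hi^2 - B * hi + C < 0 ->
  A * p^2 - B * p + C < 0.
Proof.
  intros HA Hp Hlo Hhi.
  destruct (Req_dec lo hi) as [<-|Hne]; [replace p with lo by lra; exact Hlo|].
  assert (Hid : (hi - lo) * (A * p^2 - B * p + C)
    = (hi - p) * (A * lo^2 - B * lo + C) + (p - lo) * (A * hi^2 - B * hi + C)
      - (hi - lo) * A * (p - lo) * (hi - p)) by ring.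
  assert (0 <= (hi - lo) * A * (p - lo) * (hi - p)) by (repeat apply Rmult_le_pos; lra).
  assert ((hi - p) * (A * lo^2 - B * lo + C) + (p - lo) * (A * hi^2 - B * hi + C) < 0).
  { destruct (Req_dec p hi) as [->|Hp']; [nra|].
    assert (0 < hi - p) by lra. assert (0 <= p - lo) by lra. nra. }
  nra.
Qed.

Lemma sqr_lt_of_Rabs_lt (a M : R) : Rabs a < M -> a^2 < M^2.
Proof.
  intros Ha. rewrite <- pow2_abs. pose proof (Rabs_pos a). nra.
Qed.

Lemma rplus_ge (M a : R) : M <= rplus M a.
Proof.
  unfold rplus. pose proof (sqrt_pos (M^2 - a^2)). lra.
Qed.

Lemma Delta_rplus (M a : R) : a^2 <= M^2 -> Defs.Delta M a (rplus M a) = 0.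
Proof.
  intros Ha. unfold Defs.Delta, rplus.
  pose proof (sqrt_sqrt (M^2 - a^2)). nra.
Qed.

Lemma Delta_pos (M a r : R) : a^2 <= M^2 -> rplus M a < r -> 0 < Defs.Delta M a r.
Proof.
  intros Ha Hr. pose proof (rplus_ge M a). pose proof (Delta_rplus M a Ha).
  assert (E : Defs.Delta M a r
              = Defs.Delta M a (rplus M a) + (r - rplus M a) * (r + rplus M a - 2 * M))
    by (unfold Defs.Delta; ring).
  rewrite E. apply Rplus_le_lt_0_compat; [lra|]. apply Rmult_lt_0_compat; lra.
Qed.

Definition upper_slope_poly (t q p : R) : R :=
  (-4 + 2*p - p^2) + (4 - 8*p)*t - 28*t^2 + 12*t^3 + 8*q*t*(t-1)*(6*t^2 - 3*t + 4)
  - 12*q^2*t^2*(1-t)^2*(3*t^2 + 5) - 72*q^3*t^3*(1-t)^3.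

Lemma upper_slope_poly_neg (t q p : R) :
  0 < t < 1 -> 0 < q -> 1 <= p -> upper_slope_poly t q p < 0.
Proof.
  intros Ht Hq Hp. unfold upper_slope_poly.
  assert (8*q*t*(t-1)*(6*t^2 - 3*t + 4) <= 0).
  { assert (0 < 6*t^2 - 3*t + 4) by nra. assert (0 < q*t) by nra.
    assert (0 <= q*t*(1-t)) by nra. nra. }
  assert (0 <= q^2*t^2*(1-t)^2*(3*t^2 + 5)) by (repeat apply Rmult_le_pos; nra).
  assert (0 <= q^3*t^3*(1-t)^3) by (rewrite <- !Rpow_mult_distr; apply pow_le; nra).
  assert (t^3 <= t^2) by nra.
  nra.
Qed.

Lemma slope_quad_neg_at_upper_bound (M a r : R) :
  0 < M -> Rabs a < M -> rplus M a < r ->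
  slope_quad M a r (2 + 4 * M / r + 6 * M^2 * (r - rplus M a) / r^3) < 0.
Proof.
  intros HM Ha Hr.
  pose proof (rplus_ge M a) as Hrp.
  assert (Ha2 : a^2 = 2 * M * rplus M a - rplus M a ^ 2).
  { pose proof (Delta_rplus M a (Rlt_le _ _ (sqr_lt_of_Rabs_lt a M Ha))) as HD.
    unfold Defs.Delta in HD. lra. }
  unfold slope_quad, Defs.Delta. rewrite Ha2.
  set (rp := rplus M a) in *.
  replace (_ - _ + _) with (M^2 * upper_slope_poly (rp / r) (M / rp) (rp / M))
    by (unfold upper_slope_poly; field; repeat split; lra).
  assert (upper_slope_poly (rp / r) (M / rp) (rp / M) < 0).
  { apply upper_slope_poly_neg.
    - split; [apply Rdiv_lt_0_compat; lra|].
      apply (Rmult_lt_reg_r r); [lra|]. field_simplify; lra.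
    - apply Rdiv_lt_0_compat; lra.
    - apply (Rmult_le_reg_r M); [lra|]. field_simplify; lra. }
  pose proof (pow2_gt_0 M). nra.
Qed.

Lemma is_lim_p_infty_inv (f F : R -> R) :
  continuous F 0 -> (forall r, 0 < r -> f r = F (/ r)) -> is_lim f p_infty (F 0).
Proof.
  intros HF Hf. apply (is_lim_ext_loc (fun r => F (/ r))).
  { exists 0. intros r Hr. symmetry. apply Hf, Hr. }
  apply (is_lim_comp_continuous (fun r => / r) F p_infty 0); [|exact HF].
  apply (is_lim_inv (fun r => r) p_infty p_infty (is_lim_id _)). discriminate.
Qed.

Definition hyp_h' (M rp c r : R) : R :=
  2 + 4 * M / r + 6 * M^2 * (r - rp) / r^3 - 2 * M * c / (r^2 + c^2).

Definition hyp_K (M rp c x : R) : R :=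
  2 + 4 * M * x + 6 * M^2 * x^2 * (1 - rp * x) - 2 * M * c * x^2 / (1 + c^2 * x^2).

Lemma hyp_K_inv (M rp c x : R) : 0 < x -> hyp_K M rp c x = hyp_h' M rp c (/ x).
Proof.
  intros Hx. unfold hyp_K, hyp_h'.
  assert (0 <= (c * x)^2) by apply pow2_ge_0.
  field. split; [lra|nra].
Qed.

Lemma hyp_h'_bounds (M rp c r : R) : 0 < M -> 0 < rp -> 0 <= c -> rp <= r ->
  2 <= hyp_h' M rp c r <= 2 + 4 * M / r + 6 * M^2 * (r - rp) / r^3.
Proof.
  intros HM Hrp Hc Hr. unfold hyp_h'.
  assert (Hden : 0 < r^2 + c^2) by nra.
  assert (0 <= 6 * M^2 * (r - rp) / r^3)
    by (apply Rmult_le_pos; [nra|left; apply Rinv_0_lt_compat, pow_lt; lra]).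
  assert (0 <= 2 * M * c / (r^2 + c^2))
    by (apply Rmult_le_pos; [nra|left; apply Rinv_0_lt_compat; lra]).
  (* AM-GM: 2 c r <= r^2 + c^2 *)
  assert (2 * M * c / (r^2 + c^2) <= M / r).
  { apply (Rmult_le_reg_r (r * (r^2 + c^2))); [nra|].
    field_simplify; [|lra|lra]. pose proof (pow2_ge_0 (r - c)). nra. }
  assert (4 * M / r = 4 * (M / r)) by (unfold Rdiv; ring).
  assert (0 < M / r) by (apply Rdiv_lt_0_compat; lra).
  lra.
Qed.

Lemma rational_hyp_h' (M rp c : R) : rational_on (fun x => 0 < x) (hyp_h' M rp c).
Proof.
  unfold hyp_h'. rational_on_split; intros x Hx; apply Rgt_not_eq.
  - exact Hx.
  - apply pow_lt, Hx.
  - pose proof (pow2_ge_0 c). pose proof (pow_lt x 2 Hx). lra.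
Qed.

Lemma rational_hyp_K (M rp c : R) : rational_on (fun _ => True) (hyp_K M rp c).
Proof.
  unfold hyp_K. rational_on_split; intros x _; apply Rgt_not_eq.
  pose proof (pow2_ge_0 c). pose proof (pow2_ge_0 x). nra.
Qed.

Section HyperboloidalTime.

Variables M a C : R.
Hypotheses (HM : 0 < M) (Ha : Rabs a < M) (HC : 1 <= C).

Local Notation rp := (rplus M a).
Local Notation c := ((C - 1) * M).

Let Ha2 : a^2 < M^2 := sqr_lt_of_Rabs_lt a M Ha.
Let Hrp : M <= rp := rplus_ge M a.
Let Hc : 0 <= c.
Proof. nra. Qed.

Lemma is_derive_hyp_h (r : R) : 0 < r -> is_derive (hyp_h M a C) r (hyp_h' M rp c r).
Proof.
  intros Hr. unfold hyp_h, hyp_h'.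
  assert (0 < r^2) by nra.
  auto_derive.
  - repeat split; try lra.
    + apply Rdiv_lt_0_compat; lra.
    + apply Rgt_not_eq, Rmult_lt_0_compat; nra.
  - field. repeat split; nra.
Qed.

Lemma Derive_hyp_h (r : R) : 0 < r -> Derive (hyp_h M a C) r = hyp_h' M rp c r.
Proof. intros Hr. apply is_derive_unique, is_derive_hyp_h, Hr. Qed.

Lemma hyp_h_rplus : hyp_h M a C rp = 0.
Proof.
  unfold hyp_h. cbv zeta. rewrite Rdiv_diag by lra. rewrite ln_1. unfold Rdiv. ring.
Qed.

Lemma Derive_hyp_h_ge0 (r : R) : rp <= r -> 0 <= Derive (hyp_h M a C) r.
Proof.
  intros Hr. rewrite Derive_hyp_h by lra.
  apply (Rle_trans _ 2); [lra|]. apply hyp_h'_bounds; lra.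
Qed.

Lemma hyp_h_smooth : smooth_on (fun r => 0 < r) (hyp_h M a C).
Proof.
  apply (smooth_on_is_derive _ _ (hyp_h' M rp c) (open_gt 0) is_derive_hyp_h).
  apply rational_on_smooth; [apply open_gt|apply rational_hyp_h'].
Qed.

Lemma hyp_h_level_sets_spacelike (r th : R) (X : vec4) :
  rp < r -> 0 < th < PI -> dt_apply (hyp_h M a C) r X = 0 -> X <> mkvec4 0 0 0 0 ->
  kerr_g M a r th X < 0.
Proof.
  intros Hr Hth Hdt HX.
  unfold dt_apply in Hdt. rewrite Derive_hyp_h in Hdt by lra.
  pose proof (Delta_pos M a r (Rlt_le _ _ Ha2) Hr) as HD.
  apply (kerr_g_neg_of_slope M a r th (hyp_h' M rp c r)); [lra|lra|exact HD|exact Hth| |lra|exact HX].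
  apply (convex_quad_neg_between _ _ _ 2 (2 + 4 * M / r + 6 * M^2 * (r - rp) / r^3)).
  - lra.
  - apply hyp_h'_bounds; lra.
  - unfold Defs.Delta. nra.
  - apply slope_quad_neg_at_upper_bound; assumption.
Qed.

Lemma is_lim_Yt_hyp_h : is_lim (Yt (hyp_h M a C)) p_infty 2.
Proof.
  replace 2 with (hyp_K M rp c 0) by (unfold hyp_K; field; lra).
  apply is_lim_p_infty_inv.
  - apply (@ex_derive_continuous R_AbsRing R_NormedModule). unfold hyp_K. auto_derive. nra.
  - intros r Hr. unfold Yt, dt_apply, Yfield. cbn [Xv Xr].
    rewrite Derive_hyp_h by exact Hr.
    rewrite hyp_K_inv, Rinv_inv by (apply Rinv_0_lt_compat, Hr). ring.
Qed.

Lemma is_lim_Vt_hyp_h : is_lim (fun r => r^2 / M^2 * Vt M a (hyp_h M a C) r) p_infty C.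
Proof.
  set (F := fun x => (2*M^2 + x*(12*M^3 + 6*M^2*rp - 4*M*a^2)
    - x^2*(6*M^2*a^2 + 12*M^3*rp) + 6*M^2*rp*a^2*x^3
    + 2*M*c*(1 - 2*M*x + a^2*x^2)/(1 + c^2*x^2)) / (2*M^2*(1 + a^2*x^2))).
  (* F (1/r) is r^2/M^2 V^a nabla_a t with the factor 1/r^2 of its numerator cancelled. *)
  replace (Finite C) with (Finite (F 0)) by (f_equal; unfold F; field; lra).
  apply is_lim_p_infty_inv.
  - apply (@ex_derive_continuous R_AbsRing R_NormedModule). unfold F. auto_derive. nra.
  - intros r Hr. unfold Vt, dt_apply, Vfield. cbn [Xv Xr]. unfold Defs.Delta.
    rewrite Derive_hyp_h by exact Hr. unfold F, hyp_h'.
    field. repeat split; nra.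
Qed.

Lemma is_lim_hyp_h_div : is_lim (fun r => hyp_h M a C r / r) p_infty 2.
Proof.
  set (G := fun x => 2 - 2*rp*x - 4*M*ln rp*x + 3*M^2*(rp*x - 1)^2*x/rp
                     + 2*M*(atan (c*x) - atan (c/rp))*x).
  (* Only the (ln r)/r part of h(r)/r is not a smooth function of 1/r. *)
  apply (is_lim_ext_loc (fun r => G (/ r) + 4 * M * (ln r / r))).
  { exists 0. intros r Hr. unfold G, hyp_h. cbv zeta.
    rewrite ln_div by lra. change (c / r) with (c * / r). field. lra. }
  replace 2 with (G 0 + 4 * M * 0) by (unfold G; unfold Rdiv; ring).
  apply (is_lim_plus' (fun r => G (/ r))).
  - apply (is_lim_p_infty_inv (fun r => G (/ r))); [|reflexivity].
    apply (@ex_derive_continuous R_AbsRing R_NormedModule). unfold G. auto_derive. lra.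
  - apply (is_lim_scal_l (fun r => ln r / r) (4 * M) p_infty 0), is_lim_div_ln_p.
Qed.

Lemma regular_future_hyperboloidal_hyp_h : regular_future_hyperboloidal M a (hyp_h M a C).
Proof.
  split; [|split; [|split; [|split]]].
  - exists (fun r => 0 < r). split; [apply open_gt|]. split; [intros; lra|].
    exact hyp_h_smooth.
  - exists (fun _ => True), (hyp_K M rp c).
    split; [apply open_true|]. split; [easy|]. split.
    + apply rational_on_smooth; [apply open_true|apply rational_hyp_K].
    + intros x _ Hx. rewrite Derive_hyp_h by (apply Rinv_0_lt_compat, Hx).
      apply hyp_K_inv, Hx.
  - exact hyp_h_level_sets_spacelike.
  - exists C. split; [exact is_lim_Vt_hyp_h|lra].
  - exact is_lim_Yt_hyp_h.
Qed.

End HyperboloidalTime.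

Theorem lemma2p21 (M a C : R) :
  0 < M -> Rabs a < M -> 1 <= C ->
  regular_future_hyperboloidal M a (hyp_h M a C) /\
  hyp_h M a C (rplus M a) = 0 /\
  (forall r, rplus M a <= r -> 0 <= Derive (hyp_h M a C) r) /\
  is_lim (fun r => hyp_h M a C r / r) p_infty 2 /\
  is_lim (fun r => r^2 / M^2 * Vt M a (hyp_h M a C) r) p_infty C.
Proof.
  intros HM Ha HC.
  split; [|split; [|split; [|split]]].
  - now apply regular_future_hyperboloidal_hyp_h.
  - now apply hyp_h_rplus.
  - now apply Derive_hyp_h_ge0.
  - now apply is_lim_hyp_h_div.
  - now apply is_lim_Vt_hyp_h.
Qed.
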